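(* Let $\mathsf{X}=\mathsf{Y}=\mathbb{R}^d$ with probability measures $\mu,\nu$ and cost $c(x,y)=\|x-y\|^2$, let $\pi_\varepsilon$ be the $(c,\varepsilon)$-cyclically invariant coupling for each $\varepsilon>0$ (assumed to exist), and assume $\pi_\varepsilon\to\pi_*$ weakly as $\varepsilon\to0$ for some $\pi_*\in\Pi(\mu,\nu)$. Let $\Gamma:=\operatorname{spt}\pi_*$, $\mathsf{X}_0:=\operatorname{proj}_{\mathsf{X}}\Gamma$, $\mathsf{Y}_0:=\operatorname{proj}_{\mathsf{Y}}\Gamma$. Assume there exists a Kantorovich potential $\psi$ such that $I(x,y)=c(x,y)-\psi^c(y)+\psi(x)$ for all $(x,y)\in\mathsf{X}_0\times\mathsf{Y}_0$. Let $\mathsf{X}_0$ be strictly convex and consider $(x,y)\in(\mathsf{X}_0\times\mathsf{Y}_0)\setminus\Gamma$ with $x\in\partial\mathsf{X}_0$. Suppose that $I(\tilde x,y)>0$ for all $\tilde x\in\operatorname{Int}\mathsf{X}_0\cap B_r(x)$, for some $r>0$. Then $I(x,y)>0$.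
   Context: $\mathsf{X}_0$ is strictly convex if for distinct $x,x'\in\mathsf{X}_0$ the open segment $(x,x')$ lies in $\operatorname{Int}\mathsf{X}_0$. $\Pi(\mu,\nu)$ is the set of couplings and $P:=\mu\otimes\nu$. A coupling $\pi$ is $(c,\varepsilon)$-cyclically invariant if $\pi\sim P$ and its density admits a version $\frac{d\pi}{dP}:\mathsf{X}\times\mathsf{Y}\to(0,\infty)$ with $\prod_{i=1}^k\frac{d\pi}{dP}(x_i,y_i)=\exp\big(-\frac1\varepsilon[\sum_{i=1}^k c(x_i,y_i)-\sum_{i=1}^k c(x_i,y_{i+1})]\big)\prod_{i=1}^k\frac{d\pi}{dP}(x_i,y_{i+1})$ for all $k$ and points, $y_{k+1}:=y_1$. A proper $\psi:\mathsf{X}\to(-\infty,\infty]$ is $c$-convex if $\psi(x)=\sup_y[\zeta(y)-c(x,y)]$ for some $\zeta:\mathsf{Y}\to[-\infty,\infty]$; $\psi^c(y):=\inf_x[\psi(x)+c(x,y)]$; $\partial_c\psi=\{(x,y):\psi^c(y)-\psi(x)=c(x,y)\}$; a Kantorovich potential is a $c$-convex $\psi$ with $\Gamma\subset\partial_c\psi$. The function $I$ is $I(x,y):=\sup_{k\ge2}\sup_{(x_i,y_i)_{i=2}^k\subset\Gamma}\sup_{\sigma\in\Sigma(k)}\sum_{i=1}^k c(x_i,y_i)-\sum_{i=1}^k c(x_i,y_{\sigma(i)})$ with $(x_1,y_1):=(x,y)$ and $\Sigma(k)$ the permutations of $\{1,\dots,k\}$. *)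

From HB Require Import structures.
From mathcomp Require Import all_boot all_order all_algebra.
From mathcomp Require Import all_classical all_reals all_analysis.
From mathcomp Require Import perm.
Set Implicit Arguments. Unset Strict Implicit. Unset Printing Implicit Defensive.
Import Order.TTheory GRing.Theory Num.Theory.
Import numFieldNormedType.Exports.
Local Open Scope classical_set_scope.
Local Open Scope ring_scope.

(* R^d is represented by row vectors 'rV[R]_d (with their usual topology);
   as a measurable space it carries the Borel sigma-algebra generated by the
   open sets. *)
Notation Bpt R d := (g_sigma_algebraType (@open 'rV[R]_d)).

Definition enorm (R : realType) (d : nat) (x : 'rV[R]_d) : R :=
  Num.sqrt (\sum_(i < d) (x ord0 i) ^+ 2).
Definition cost (R : realType) (d : nat) (x y : 'rV[R]_d) : R :=
  enorm (x - y) ^+ 2.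
Definition eball (R : realType) (d : nat) (x : 'rV[R]_d) (r : R) :=
  [set z : 'rV[R]_d | enorm (z - x) < r].

Definition bdry (T : topologicalType) (A : set T) := closure A `\` interior A.

Definition strictly_convex (R : realType) (d : nat) (X0 : set 'rV[R]_d) :=
  forall x x', X0 x -> X0 x' -> x != x' ->
    forall t : R, 0 < t < 1 -> interior X0 ((1 - t) *: x + t *: x').

Definition is_coupling (R : realType) (d : nat) (mu nu : probability (Bpt R d) R)
  (pi : probability (Bpt R d * Bpt R d)%type R) :=
  (forall A : set (Bpt R d), measurable A -> pi (A `*` setT) = mu A) /\
  (forall B : set (Bpt R d), measurable B -> pi (setT `*` B) = nu B).

Definition cyc_invariant (R : realType) (d : nat) (eps : R)
  (mu nu : probability (Bpt R d) R) (pi : probability (Bpt R d * Bpt R d)%type R) :=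
  is_coupling mu nu pi /\
  (pi `<< (mu \x nu)%E) /\ ((mu \x nu)%E `<< pi) /\
  exists f : (Bpt R d * Bpt R d)%type -> R,
    measurable_fun setT f /\ (forall z, 0 < f z) /\
    (forall A, measurable A -> pi A = (\int[(mu \x nu)%E]_(z in A) (f z)%:E)%E) /\
    forall (k : nat) (xs ys : 'I_k -> 'rV[R]_d),
      \prod_(i < k) f (xs i, ys i) =
      expR (- eps^-1 * (\sum_(i < k) cost (xs i) (ys i)
                        - \sum_(i < k) cost (xs i) (ys (ordS i))))
      * \prod_(i < k) f (xs i, ys (ordS i)).

Definition weak_conv_0 (R : realType) (d : nat)
  (pis : R -> probability (Bpt R d * Bpt R d)%type R)
  (pistar : probability (Bpt R d * Bpt R d)%type R) :=
  forall f : 'rV[R]_d * 'rV[R]_d -> R, continuous f ->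
    (exists M : R, forall z, `|f z| <= M) ->
    ((fun eps => \int[pis eps]_z (f z)%:E) @ 0^'+ --> \int[pistar]_z (f z)%:E)%E.

Definition spt (R : realType) (d : nat) (pi : probability (Bpt R d * Bpt R d)%type R)
  : set ('rV[R]_d * 'rV[R]_d) :=
  [set z | forall U : set ('rV[R]_d * 'rV[R]_d), open U -> U z -> (0 < pi U)%E].

Definition proper_fun (R : realType) (d : nat) (psi : 'rV[R]_d -> \bar R) :=
  (forall x, psi x != -oo%E) /\ exists x, psi x != +oo%E.

Definition c_convex (R : realType) (d : nat) (psi : 'rV[R]_d -> \bar R) :=
  proper_fun psi /\
  exists zeta : 'rV[R]_d -> \bar R,
    forall x, psi x = ereal_sup [set (zeta y - (cost x y)%:E)%E | y in [set: 'rV[R]_d]].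

Definition c_transform (R : realType) (d : nat) (psi : 'rV[R]_d -> \bar R)
  (y : 'rV[R]_d) : \bar R :=
  ereal_inf [set (psi x + (cost x y)%:E)%E | x in [set: 'rV[R]_d]].

Definition c_subdiff (R : realType) (d : nat) (psi : 'rV[R]_d -> \bar R) :=
  [set z : 'rV[R]_d * 'rV[R]_d | (c_transform psi z.2 - psi z.1)%E = (cost z.1 z.2)%:E].

Definition kantorovich_potential (R : realType) (d : nat)
  (Gamma : set ('rV[R]_d * 'rV[R]_d)) (psi : 'rV[R]_d -> \bar R) :=
  c_convex psi /\ Gamma `<=` c_subdiff psi.

(* the function I; k = n.+2 >= 2, index 0 plays the role of index 1 *)
Definition Ifun (R : realType) (d : nat) (Gamma : set ('rV[R]_d * 'rV[R]_d))
  (x y : 'rV[R]_d) : \bar R :=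
  ereal_sup [set v%:E | v in
    [set v : R | exists (n : nat) (p : 'I_n.+2 -> 'rV[R]_d * 'rV[R]_d) (s : {perm 'I_n.+2}),
       p ord0 = (x, y) /\ (forall i, i != ord0 -> Gamma (p i)) /\
       v = \sum_(i < n.+2) cost (p i).1 (p i).2
           - \sum_(i < n.+2) cost (p i).1 (p (s i)).2]].

(* Pick (x', y) in Gamma; then x' <> x.  For a c-convex psi the map
   z |-> psi z + |z - y|^2 is a supremum of the functions
   z |-> zeta w + |z - y|^2 - |z - w|^2, which are affine in z, hence it is
   convex.  Since I(., y) = psi + c(., y) - psi^c(y) on X0 x Y0 and I(x', y) = 0,
   this gives I(z, y) <= (1 - t) I(x, y) for z = (1 - t) x + t x'.  Taking t
   small, strict convexity puts z in Int X0 /\ B_r(x), so I(z, y) > 0, and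
   therefore I(x, y) > 0. *)
From HB Require Import structures.
From mathcomp Require Import all_boot all_order all_algebra.
From mathcomp Require Import all_classical all_reals all_analysis.
From mathcomp Require Import ring lra.
Set Implicit Arguments.
Unset Strict Implicit.
Unset Printing Implicit Defensive.

Import Order.TTheory GRing.Theory Num.Theory.
Import numFieldNormedType.Exports.
Local Open Scope classical_set_scope.
Local Open Scope ring_scope.

Section QuadraticCost.
Variables (R : realType) (d : nat).
Implicit Types (x y w v : 'rV[R]_d) (t : R).

Lemma enormZ t v : enorm (t *: v) = `|t| * enorm v.
Proof.
rewrite /enorm.
have -> : \sum_(i < d) (t *: v) ord0 i ^+ 2 = t ^+ 2 * \sum_(i < d) v ord0 i ^+ 2.
  by rewrite mulr_sumr; apply: eq_bigr => i _; rewrite !mxE exprMn.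
by rewrite sqrtrM ?sqr_ge0 // sqrtr_sqr.
Qed.

Lemma cost_sum x y : cost x y = \sum_(i < d) (x ord0 i - y ord0 i) ^+ 2.
Proof.
rewrite /cost /enorm sqr_sqrtr; last by apply: sumr_ge0 => i _; exact: sqr_ge0.
by apply: eq_bigr => i _; rewrite !mxE.
Qed.

(* The quadratic terms in z cancel. *)
Lemma costB_segment x (x' : 'rV[R]_d) y w t :
  cost ((1 - t) *: x + t *: x') y - cost ((1 - t) *: x + t *: x') w =
  (1 - t) * (cost x y - cost x w) + t * (cost x' y - cost x' w).
Proof.
rewrite !cost_sum -!sumrB !mulr_sumr -big_split /=.
by apply: eq_bigr => i _; rewrite !mxE; ring.
Qed.

Lemma segment_meets_eball x (x' : 'rV[R]_d) r :
  0 < r -> exists2 t, 0 < t < 1 & eball x r ((1 - t) *: x + t *: x').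
Proof.
move=> r_gt0; pose E := enorm (x' - x).
have E_ge0 : 0 <= E := sqrtr_ge0 _.
have Er_gt0 : 0 < 2 * (E + r) by lra.
exists (r / (2 * (E + r))).
  by apply/andP; split; [rewrite divr_gt0 | rewrite ltr_pdivrMr // mul1r]; lra.
rewrite /eball /=.
have -> : (1 - r / (2 * (E + r))) *: x + r / (2 * (E + r)) *: x' - x =
          r / (2 * (E + r)) *: (x' - x).
  by apply/rowP => i; rewrite !mxE; ring.
rewrite enormZ gtr0_norm ?divr_gt0 // -/E mulrAC ltr_pdivrMr //; nra.
Qed.

Lemma c_convex_segment_le (psi : 'rV[R]_d -> \bar R) x (x' : 'rV[R]_d) y t (px px' : R) :
  c_convex psi -> psi x = px%:E -> psi x' = px'%:E -> 0 <= t <= 1 ->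
  (psi ((1 - t) *: x + t *: x')%R <=
    ((1 - t) * (px + cost x y) + t * (px' + cost x' y)
     - cost ((1 - t) *: x + t *: x') y)%R%:E)%E.
Proof.
move=> [_ [zeta psiE]] psix psix' /andP[t_ge0 t_le1].
have psi_ge w z : (zeta w - (cost z w)%:E <= psi z)%E.
  by rewrite psiE; apply: ereal_sup_ubound; exists w.
rewrite psiE; apply: ge_ereal_sup => _ [w _ <-].
case zetaw: (zeta w) => [a| |]; last by rewrite leNye.
- have := psi_ge w x; have := psi_ge w x'.
  rewrite psix psix' zetaw -!EFinB !lee_fin => hx' hx.
  have := costB_segment x x' y w t.
  have : (1 - t) * (a - cost x w) <= (1 - t) * px by apply: ler_wpM2l; lra.
  have : t * (a - cost x' w) <= t * px' by apply: ler_wpM2l.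
  lra.
- by have := psi_ge w x; rewrite psix zetaw.
Qed.

Lemma c_subdiff_finite (psi : 'rV[R]_d -> \bar R) x y :
  psi x != -oo%E -> c_subdiff psi (x, y) ->
  exists px ct, [/\ psi x = px%:E, c_transform psi y = ct%:E & ct = px + cost x y].
Proof.
rewrite /c_subdiff /=.
case: (psi x) => [px| |] // _; case: (c_transform psi y) => [ct| |] // [sub].
by exists px, ct; split => //; rewrite -sub; ring.
Qed.

End QuadraticCost.

Theorem lemma5p4 (R : realType) (d : nat)
  (mu nu : probability (Bpt R d) R)
  (pis : R -> probability (Bpt R d * Bpt R d)%type R)
  (pistar : probability (Bpt R d * Bpt R d)%type R)
  (psi : 'rV[R]_d -> \bar R) (x y : 'rV[R]_d) :
  (forall eps : R, 0 < eps -> cyc_invariant eps mu nu (pis eps)) ->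
  is_coupling mu nu pistar ->
  weak_conv_0 pis pistar ->
  kantorovich_potential (spt pistar) psi ->
  (forall x0 y0, (fst @` spt pistar) x0 -> (snd @` spt pistar) y0 ->
     Ifun (spt pistar) x0 y0 = ((cost x0 y0)%:E - c_transform psi y0 + psi x0)%E) ->
  strictly_convex (fst @` spt pistar) ->
  (fst @` spt pistar) x -> (snd @` spt pistar) y -> ~ spt pistar (x, y) ->
  bdry (fst @` spt pistar) x ->
  (exists2 r : R, 0 < r & forall xt, interior (fst @` spt pistar) xt ->
       eball x r xt -> (0 < Ifun (spt pistar) xt y)%E) ->
  (0 < Ifun (spt pistar) x y)%E.
Proof.
move=> _ _ _ [psi_cvx sub_psi] Iformula X0_cvx X0x Y0y notGxy _ [r r_gt0 Ipos].
have psi_finite z : psi z != -oo%E := psi_cvx.1.1 z.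
have [[x' y'] Gx'y /= y'E] := Y0y; subst y'.
have neq_xx' : x != x' by apply: contra_notN notGxy => /eqP->.
have [px' [ct [psix' cty ctE]]] := c_subdiff_finite (psi_finite x') (sub_psi _ Gx'y).
rewrite ltNge Iformula // cty; apply/negP.
have := psi_finite x; case psix: (psi x) => [px| |] // _.
rewrite -EFinB -EFinD lee_fin => Ixy_le0.
have [t /andP[t_gt0 t_lt1] zball] := segment_meets_eball x x' r_gt0.
set z := (1 - t) *: x + t *: x' in zball.
have X0z : interior (fst @` spt pistar) z.
  by apply: X0_cvx => //; [exists (x', y) | rewrite t_gt0 t_lt1].
have := Ipos z X0z zball; rewrite Iformula ?cty //; last exact: interior_subset.
have t01 : 0 <= t <= 1 by rewrite !ltW.
have := c_convex_segment_le y psi_cvx psix psix' t01.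
have : (1 - t) * (cost x y - ct + px) <= 0 by rewrite mulr_ge0_le0 // subr_ge0 ltW.
rewrite -/z; case: (psi z) => [pz| |] //.
rewrite -EFinB -EFinD !lee_fin lte_fin ctE.
move: (cost x y) (cost x' y) (cost z y) => cxy cx'y czy; lra.
Qed.
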